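(* Let $\kappa$ be an uncountable regular cardinal and let $\mathcal{I}$ be a $\kappa$-complete proper ideal on $\kappa$ containing every bounded subset of $\kappa$, and suppose $\mathcal{I}$ contains an unbounded subset of $\kappa$. Let $\nu\in\{2,\kappa\}$. Then the class of $\mathcal{I}$-analytic subsets of ${}^{\kappa}\nu$ is closed under unions of at most $2^\kappa$ sets.
   Context: Work in ZFC. For $\mu\in\{2,\kappa\}$, ${}^{\kappa}\mu$ is the set of functions $\kappa\to\mu$. For $f\colon D\to\mu$ with $D\in\mathcal{I}$ let $\mathbf{N}_f=\{x\in{}^{\kappa}\mu: f\subseteq x\}$; the $\mathcal{I}$-topology $\tau_{\mathcal{I}}$ on ${}^{\kappa}\mu$ is generated by these sets. A function ${}^{\kappa}\kappa\to{}^{\kappa}\nu$ is $\mathcal{I}$-continuous if it is continuous when both spaces carry $\tau_{\mathcal{I}}$. A set $A\subseteq{}^{\kappa}\nu$ is $\mathcal{I}$-analytic if either $A=\emptyset$ or there are a $\tau_{\mathcal{I}}$-closed set $C\subseteq{}^{\kappa}\kappa$ and an $\mathcal{I}$-continuous function $\Phi\colon{}^{\kappa}\kappa\to{}^{\kappa}\nu$ with $\Phi(C)=A$. *)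

Set Implicit Arguments.

Definition card_le (A B : Type) : Prop := exists f : A -> B, forall x y, f x = f y -> x = y.
Definition card_lt (A B : Type) : Prop := card_le A B /\ ~ card_le B A.

(* kappa is represented by a type T carrying a strict well-order lt of order type kappa. *)
Definition strict_wellorder (T : Type) (lt : T -> T -> Prop) : Prop :=
  (forall x, ~ lt x x) /\
  (forall x y z, lt x y -> lt y z -> lt x z) /\
  (forall x y, lt x y \/ x = y \/ lt y x) /\
  well_founded lt.

(* The order type is a cardinal (initial ordinal): every proper initial segment is smaller. *)
Definition is_initial (T : Type) (lt : T -> T -> Prop) : Prop :=
  forall a : T, card_lt {b : T | lt b a} T.

Definition bounded (T : Type) (lt : T -> T -> Prop) (S : T -> Prop) : Prop :=
  exists a, forall b, S b -> lt b a.

Definition is_regular (T : Type) (lt : T -> T -> Prop) : Prop :=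
  forall S : T -> Prop, card_lt {b : T | S b} T -> bounded lt S.

Definition uncountable (T : Type) : Prop := ~ card_le T nat.

Definition is_ideal (T : Type) (I : (T -> Prop) -> Prop) : Prop :=
  I (fun _ => False) /\
  (forall S S' : T -> Prop, I S -> (forall a, S' a -> S a) -> I S') /\
  (forall S S' : T -> Prop, I S -> I S' -> I (fun a => S a \/ S' a)).

Definition kappa_complete (T : Type) (I : (T -> Prop) -> Prop) : Prop :=
  forall (J : Type) (F : J -> T -> Prop), card_lt J T ->
    (forall j, I (F j)) -> I (fun a => exists j, F j a).

Definition proper_ideal (T : Type) (I : (T -> Prop) -> Prop) : Prop :=
  ~ I (fun _ => True).

(* The I-topology on T -> V: generated by the sets N_f = {x | f ⊆ x}, f : D -> V, D ∈ I. *)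
Definition I_open (T V : Type) (I : (T -> Prop) -> Prop) (U : (T -> V) -> Prop) : Prop :=
  forall x, U x -> exists D : T -> Prop, I D /\
    (forall y : T -> V, (forall a, D a -> y a = x a) -> U y).

Definition I_closed (T V : Type) (I : (T -> Prop) -> Prop) (C : (T -> V) -> Prop) : Prop :=
  I_open I (fun x => ~ C x).

Definition I_continuous (T V : Type) (I : (T -> Prop) -> Prop)
  (Phi : (T -> T) -> (T -> V)) : Prop :=
  forall U : (T -> V) -> Prop, I_open I U -> I_open I (fun x => U (Phi x)).

Definition I_analytic (T V : Type) (I : (T -> Prop) -> Prop) (A : (T -> V) -> Prop) : Prop :=
  (forall y, ~ A y) \/
  exists (C : (T -> T) -> Prop) (Phi : (T -> T) -> (T -> V)),
    I_closed I C /\ I_continuous I Phi /\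
    (forall y, A y <-> exists x, C x /\ Phi x = y).

(* Closure of the I-analytic subsets of T -> V under unions of at most 2^kappa sets
   (2^kappa = |T -> bool|). *)
Definition analytic_union_closed (T V : Type) (I : (T -> Prop) -> Prop) : Prop :=
  forall (J : Type) (A : J -> (T -> V) -> Prop), card_le J (T -> bool) ->
    (forall j, I_analytic I (A j)) -> I_analytic I (fun y => exists j, A j y).

From Stdlib Require Import Classical ClassicalEpsilon FunctionalExtensionality ProofIrrelevance.

Set Implicit Arguments.

(* Idea: by regularity an unbounded set S in I has size kappa, and the I-topology is
   so fine that every map depending only on the coordinates in S is I-continuous.
   Since x |-> x|S maps ^kappa kappa onto a copy of ^kappa nu, every nonempty subset of
   ^kappa nu is a continuous image of the whole (closed) space. So every subset is
   I-analytic, and closure under unions of any size is immediate. *)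

Lemma extend_along_injection (A B C : Type) (h : A -> B)
  (h_inj : forall a a', h a = h a' -> a = a') (d : B -> C) (z : A -> C) :
  exists x : B -> C, forall a, x (h a) = z a.
Proof.
  assert (Hpt : forall b, exists c, forall a, h a = b -> c = z a).
  { intro b; destruct (classic (exists a, h a = b)) as [[a Ha] | Hnot].
    - exists (z a); intros a' Ha'; f_equal; apply h_inj; congruence.
    - exists (d b); intros a Ha; exfalso; eauto. }
  destruct (choice _ Hpt) as [x Hx]; exists x; intro a; apply (Hx (h a)), eq_refl.
Qed.

Lemma card_le_sig (T : Type) (S : T -> Prop) : card_le {b : T | S b} T.
Proof.
  exists (@proj1_sig _ _); intros [a pa] [b pb]; simpl; intros <-.
  f_equal; apply proof_irrelevance.
Qed.

Lemma injection_into_unbounded (T : Type) (lt : T -> T -> Prop) (S : T -> Prop) :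
  is_regular lt -> ~ bounded lt S ->
  exists h : T -> T, (forall a b, h a = h b -> a = b) /\ (forall a, S (h a)).
Proof.
  intros Hreg HnS.
  assert (Hle : card_le T {b : T | S b}).
  { apply NNPP; intro Hn; apply HnS, Hreg; split; [apply card_le_sig | exact Hn]. }
  destruct Hle as [f f_inj].
  exists (fun a => proj1_sig (f a)); split.
  - intros a b E; apply f_inj; revert E; destruct (f a), (f b); simpl; intros <-.
    f_equal; apply proof_irrelevance.
  - intro a; exact (proj2_sig (f a)).
Qed.

Lemma uncountable_two_points (T : Type) :
  uncountable T -> exists t0 t1 : T, t0 <> t1.
Proof.
  intro Hunc; apply NNPP; intro Hn; apply Hunc.
  exists (fun _ => 0); intros x y _; apply NNPP; eauto.
Qed.

Lemma bool_surjection (T : Type) (t0 t1 : T) :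
  t0 <> t1 -> exists q : T -> bool, forall v, exists t, q t = v.
Proof.
  intro Ht.
  exists (fun t => if excluded_middle_informative (t = t0) then true else false).
  intros []; [exists t0 | exists t1];
    destruct (excluded_middle_informative _); congruence.
Qed.

Section EveryAnalytic.

Variables (T V : Type) (I : (T -> Prop) -> Prop).

Lemma I_closed_full : I_closed (V := T) I (fun _ => True).
Proof. intros x Hx; exfalso; exact (Hx Logic.I). Qed.

Lemma I_continuous_of_local (S : T -> Prop) (Phi : (T -> T) -> (T -> V)) :
  I S -> (forall x y, (forall a, S a -> x a = y a) -> Phi x = Phi y) ->
  I_continuous I Phi.
Proof.
  intros HS Hloc U _ x Hx; exists S; split; [exact HS |].
  intros y Hy; rewrite (Hloc y x Hy); exact Hx.
Qed.

Lemma I_analytic_of_continuous_onto (Phi : (T -> T) -> (T -> V)) (A : (T -> V) -> Prop) :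
  I_continuous I Phi -> (forall y, A y <-> exists x, Phi x = y) -> I_analytic I A.
Proof.
  intros Hcont Hrange; right; exists (fun _ => True), Phi.
  split; [apply I_closed_full | split; [exact Hcont |]].
  intro y; rewrite Hrange; firstorder.
Qed.

Variables (S : T -> Prop) (h : T -> T) (q : T -> V).
Hypotheses (HS : I S) (hS : forall a, S (h a))
  (h_inj : forall a b, h a = h b -> a = b) (q_surj : forall v, exists t, q t = v).

Definition decode (x : T -> T) : T -> V := fun t => q (x (h t)).

Lemma decode_local (x y : T -> T) : (forall a, S a -> x a = y a) -> decode x = decode y.
Proof.
  intro Hxy; apply functional_extensionality; intro t; unfold decode.
  rewrite Hxy; [reflexivity | apply hS].
Qed.

Lemma decode_surjective (y : T -> V) : exists x, decode x = y.
Proof.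
  destruct (choice _ q_surj) as [s Hs].
  destruct (extend_along_injection h h_inj (fun b => s (y b)) (fun a => s (y a))) as [x Hx].
  exists x; apply functional_extensionality; intro t; unfold decode.
  rewrite Hx; apply Hs.
Qed.

Lemma every_set_I_analytic (A : (T -> V) -> Prop) : I_analytic I A.
Proof.
  destruct (classic (exists y, A y)) as [[y0 Hy0] | Hempty].
  2: { left; intros y Hy; apply Hempty; eauto. }
  pose (Phi := fun x => if excluded_middle_informative (A (decode x)) then decode x else y0).
  apply (I_analytic_of_continuous_onto (Phi := Phi)).
  - apply (I_continuous_of_local Phi HS); intros x x' Hxx'.
    unfold Phi; rewrite (decode_local x x' Hxx'); reflexivity.
  - intro y; split.
    + intro Hy; destruct (decode_surjective y) as [x Hx]; exists x.
      unfold Phi; rewrite Hx; destruct (excluded_middle_informative (A y)); tauto.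
    + intros [x <-]; unfold Phi; destruct (excluded_middle_informative _); auto.
Qed.

End EveryAnalytic.

Lemma analytic_union_closed_of_every_set (T V : Type) (I : (T -> Prop) -> Prop) :
  (forall A : (T -> V) -> Prop, I_analytic I A) -> analytic_union_closed V I.
Proof. intros Hall J A _ _; apply Hall. Qed.

Theorem theorem5p2 (T : Type) (lt : T -> T -> Prop)
  (Hwo : strict_wellorder lt) (Hcard : is_initial lt)
  (Hreg : is_regular lt) (Hunc : uncountable T)
  (I : (T -> Prop) -> Prop)
  (Hideal : is_ideal I) (Hcomp : kappa_complete I) (Hprop : proper_ideal I)
  (Hbdd : forall S : T -> Prop, bounded lt S -> I S)
  (Hunb : exists S : T -> Prop, I S /\ ~ bounded lt S) :
  analytic_union_closed bool I /\ analytic_union_closed T I.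
Proof.
  destruct Hunb as [S [HS HnS]].
  destruct (injection_into_unbounded Hreg HnS) as [h [h_inj hS]].
  destruct (uncountable_two_points Hunc) as [t0 [t1 Ht]].
  destruct (bool_surjection Ht) as [q q_surj].
  split; apply analytic_union_closed_of_every_set; intro A.
  - exact (every_set_I_analytic I S h q HS hS h_inj q_surj A).
  - exact (every_set_I_analytic I S h (fun t => t) HS hS h_inj (fun v => ex_intro _ v eq_refl) A).
Qed.
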